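(* Let $\lambda\in(0,1)$. A nonconstant meromorphic solution $\partial$ of the differential equation $9\,\partial^2(\partial')^2=2(1-\partial^2)(4\partial^3-3\partial+1-2\lambda^2)$ can have no zeros.
   Context: Here $\partial$ denotes an unknown meromorphic function of a complex variable (on a connected open subset of $\mathbb{C}$), not an operator; $\partial'$ is its derivative. *)

From Stdlib Require Import Reals.
From Coquelicot Require Export Coquelicot.
Open Scope R_scope.

Definition connected_set (U : C -> Prop) : Prop :=
  forall A B : C -> Prop, open A -> open B ->
    (forall z, U z -> A z \/ B z) ->
    (forall z, U z -> A z -> B z -> False) ->
    (forall z, U z -> A z) \/ (forall z, U z -> B z).

Definition is_domain (U : C -> Prop) : Prop :=
  open U /\ connected_set U /\ exists z, U z.

Definition meromorphic_on (U : C -> Prop) (P : C -> Prop) (f : C -> C) : Prop :=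
  (forall p, P p -> U p) /\
  (forall z, U z -> exists eps : R, 0 < eps /\
       forall w, Cmod (Cminus w z) < eps -> P w -> w = z) /\
  (forall z, U z -> ~ P z -> ex_derive (K := C_AbsRing) (V := C_NormedModule) f z) /\
  (forall p, P p -> filterlim (fun w => Cmod (f w)) (locally' p) (Rbar_locally p_infty)).

From Stdlib Require Import Reals Lra Psatz List Classical ClassicalEpsilon.
From Coquelicot Require Import Coquelicot.
Open Scope R_scope.

(* At a zero of f off the poles the equation forces 1 - 2 lam^2 = 0, after which it reads
   9 f (f')^2 = 2 (1 - f^2)(4 f^2 - 3) wherever f <> 0, so that |f| |f'|^2 >= 1/3 near the zero.
   Such an f vanishes on a whole disc around the zero z0. Only pointwise differentiability is
   available, so instead of power series we use an extremal argument: if f w1 <> 0 with w1 close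
   to z0, maximise |f w|^(3/2) - k |w - w1|, k = sqrt(1/3) / 2, over a small square around z0. At an
   interior maximum the lower bound on |f'| makes |f|^(3/2) grow faster than the cone, while at a
   boundary maximum |f|^(3/2) would beat the linear bound |f w| <= C |w - z0| coming from
   f z0 = 0. Hence the zeros of f form an open and closed subset of the connected domain (poles and
   non-zeros have neighbourhoods free of zeros), so f would be identically zero on it. *)

Lemma Cmod_le_Rabs_sum (c : C) : Cmod c <= Rabs (fst c) + Rabs (snd c).
Proof.
  assert (H1 := Rabs_pos (fst c)); assert (H2 := Rabs_pos (snd c)).
  apply Rsqr_incr_0_var; [|lra].
  unfold Rsqr. replace (Cmod c * Cmod c) with (Cmod c ^ 2) by ring.
  rewrite Cmod2_alt. unfold Re, Im.
  rewrite <- (pow2_abs (fst c)), <- (pow2_abs (snd c)). nra.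
Qed.

Lemma Rabs_snd_le_Cmod (c : C) : Rabs (snd c) <= Cmod c.
Proof. eapply Rle_trans; [apply Rmax_r | apply Rmax_Cmod]. Qed.

Lemma Cmod_sub_triangle (a b c : C) : Cmod (a - c)%C <= Cmod (a - b)%C + Cmod (b - c)%C.
Proof.
  replace (a - c)%C with ((a - b) + (b - c))%C by ring. apply Cmod_triangle.
Qed.

Lemma Cmod_sub_sym (a b : C) : Cmod (a - b)%C = Cmod (b - a)%C.
Proof. rewrite <- Cmod_opp. f_equal. ring. Qed.

Lemma Cmod_sub_diag (a : C) : Cmod (a - a)%C = 0.
Proof. replace (a - a)%C with (RtoC 0) by ring. apply Cmod_0. Qed.

Lemma Rabs_Cmod_sub_le (a b : C) : Rabs (Cmod a - Cmod b) <= Cmod (a - b)%C.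
Proof.
  assert (Ha := Cmod_triangle (a - b)%C b). assert (Hb := Cmod_triangle (b - a)%C a).
  replace (a - b + b)%C with a in Ha by ring. replace (b - a + a)%C with b in Hb by ring.
  rewrite Cmod_sub_sym in Hb. apply Rabs_le. lra.
Qed.

Lemma open_Cmod_ball (A : C -> Prop) (z : C) : open A -> A z ->
  exists e, 0 < e /\ forall w, Cmod (w - z)%C < e -> A w.
Proof.
  intros HA Hz. destruct (HA z Hz) as [e He].
  exists e. split; [apply cond_pos|]. intros w Hw.
  apply He, C_NormedModule_mixin_compat1, Hw.
Qed.

Lemma open_Cmod_interior (Q : C -> Prop) :
  open (fun z => exists e, 0 < e /\ forall w, Cmod (w - z)%C < e -> Q w).
Proof.
  intros z [e [He HQ]].
  assert (He4 : 0 < e / 4) by lra.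
  exists (mkposreal _ He4). intros y Hy.
  apply C_NormedModule_mixin_compat2 in Hy.
  change (Cmod (y - z)%C < sqrt 2 * (e / 4)) in Hy.
  assert (Hs2 : sqrt 2 < 2).
  { assert (E := sqrt_sqrt 2 ltac:(lra)). assert (P := Rlt_sqrt2_0). nra. }
  exists (e / 2). split; [lra|]. intros w Hw. apply HQ.
  assert (Hyz := Cmod_sub_triangle w y z).
  assert (0 <= Cmod (y - z)%C) by apply Cmod_ge_0.
  nra.
Qed.

Lemma is_derive_C_approx (f : C -> C) (z d : C) :
  is_derive (K := C_AbsRing) (V := C_NormedModule) f z d ->
  forall eps, 0 < eps -> exists del, 0 < del /\ forall w, Cmod (w - z)%C < del ->
    Cmod (f w - f z - (w - z) * d)%C <= eps * Cmod (w - z)%C.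
Proof.
  intros [_ Hd] eps Heps.
  destruct (Hd z (fun P HP => HP) (mkposreal eps Heps)) as [del Hdel].
  exists del. split; [apply cond_pos|]. intros w Hw. apply Hdel, Hw.
Qed.

Lemma is_derive_C_lipschitz (f : C -> C) (z d : C) :
  is_derive (K := C_AbsRing) (V := C_NormedModule) f z d ->
  exists del, 0 < del /\ forall w, Cmod (w - z)%C < del ->
    Cmod (f w - f z)%C <= (Cmod d + 1) * Cmod (w - z)%C.
Proof.
  intros Hd. destruct (is_derive_C_approx f z d Hd 1 Rlt_0_1) as [del [Hdel Happ]].
  exists del. split; [exact Hdel|]. intros w Hw. specialize (Happ w Hw).
  assert (T := Cmod_triangle (f w - f z - (w - z) * d)%C ((w - z) * d)%C).
  replace (f w - f z - (w - z) * d + (w - z) * d)%C with (f w - f z)%C in T by ring.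
  rewrite Cmod_mult in T. lra.
Qed.

Lemma is_derive_C_nonzero_near (f : C -> C) (z d : C) :
  is_derive (K := C_AbsRing) (V := C_NormedModule) f z d -> f z <> 0%C ->
  exists e, 0 < e /\ forall w, Cmod (w - z)%C < e -> f w <> 0%C.
Proof.
  intros Hd Hfz.
  destruct (is_derive_C_lipschitz f z d Hd) as [del [Hdel Hlip]].
  assert (Hm : 0 < Cmod (f z)) by (apply Cmod_gt_0; exact Hfz).
  assert (HD := Cmod_ge_0 d).
  exists (Rmin del (Cmod (f z) / (Cmod d + 1))). split.
  { apply Rmin_pos; [exact Hdel|]. apply Rdiv_lt_0_compat; lra. }
  intros w Hw Hfw.
  assert (Hw1 : Cmod (w - z)%C < del) by (eapply Rlt_le_trans; [exact Hw | apply Rmin_l]).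
  assert (Hw2 : Cmod (w - z)%C * (Cmod d + 1) < Cmod (f z)).
  { apply (Rmult_lt_compat_r (Cmod d + 1)) in Hw; [|lra].
    eapply Rlt_le_trans; [exact Hw|].
    apply (Rmult_le_reg_r (/ (Cmod d + 1))); [apply Rinv_0_lt_compat; lra|].
    assert (Rmin del (Cmod (f z) / (Cmod d + 1)) <= Cmod (f z) / (Cmod d + 1)) by apply Rmin_r.
    field_simplify; lra. }
  specialize (Hlip w Hw1). rewrite Hfw in Hlip.
  replace (0 - f z)%C with (- f z)%C in Hlip by ring. rewrite Cmod_opp in Hlip.
  lra.
Qed.

(** * Maxima on compact boxes *)

Lemma list_argmax {T : Type} (P : T -> Prop) (h : T -> R) (l : list T) :
  (exists t, In t l /\ P t) ->
  exists t0, In t0 l /\ P t0 /\ forall t, In t l -> P t -> h t <= h t0.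
Proof.
  induction l as [|x l IH]; intros [t [Ht Pt]]; [destruct Ht|].
  destruct (classic (exists t, In t l /\ P t)) as [Hl|Hl].
  - destruct (IH Hl) as [t0 [Ht0 [Pt0 Hmax]]].
    destruct (classic (P x /\ h t0 <= h x)) as [[Px Hx]|Hx].
    + exists x. split; [left; reflexivity|]. split; [exact Px|].
      intros t' [<-|Ht'] Pt'; [lra|]. specialize (Hmax t' Ht' Pt'). lra.
    + exists t0. split; [right; exact Ht0|]. split; [exact Pt0|].
      intros t' [<-|Ht'] Pt'; [|auto]. apply Rnot_lt_le. intro. apply Hx. split; [exact Pt'|lra].
  - destruct Ht as [<-|Ht]; [|exfalso; eauto].
    exists x. split; [left; reflexivity|]. split; [exact Pt|].
    intros t' [<-|Ht'] Pt'; [lra|]. exfalso; eauto.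
Qed.

Definition in_box (a b c d : R) (w : C) : Prop := a <= fst w <= b /\ c <= snd w <= d.

Section Box.

Variables a b c d : R.
Hypotheses (Hab : a <= b) (Hcd : c <= d).

Let box := in_box a b c d.

Definition box_continuous (g : C -> R) : Prop :=
  forall w, box w -> forall eps, 0 < eps -> exists del, 0 < del /\
    forall w', box w' -> Cmod (w' - w)%C < del -> Rabs (g w' - g w) < eps.

Definition box_locally_dominated (g h : C -> R) : Prop :=
  forall t, box t -> exists del, 0 < del /\
    forall w, box w -> Cmod (w - t)%C < del -> g w < h t.

Lemma box_finite_subcover (g h : C -> R) : box_locally_dominated g h ->
  exists l : list C, forall w, box w -> exists t, In t l /\ box t /\ g w < h t.
Proof.
  intros Hdom.
  pose (pt := fun t : Compactness.Tn 2 R => (fst t, fst (snd t)) : C).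
  assert (Hpt : forall t, bounded_n 2 (a, (c, tt)) (b, (d, tt)) t <-> box (pt t)).
  { intros [t1 [t2 []]]. unfold box, in_box, pt. simpl. tauto. }
  assert (Hdel : forall t, {del : posreal | box (pt t) ->
      forall w, box w -> Cmod (w - pt t)%C < 2 * del -> g w < h (pt t)}).
  { intro t. apply constructive_indefinite_description.
    destruct (classic (box (pt t))) as [Ht|Ht].
    - destruct (Hdom _ Ht) as [del [Hdel Hw]].
      exists (mkposreal (del / 2) ltac:(lra)). intros _ w Hw' Hc.
      apply Hw; [exact Hw'|]. simpl in Hc. lra.
    - exists (mkposreal 1 Rlt_0_1). intro; contradiction. }
  destruct (classic (exists l : list (Compactness.Tn 2 R), forall x,
      bounded_n 2 (a, (c, tt)) (b, (d, tt)) x -> exists t, In t l /\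
      bounded_n 2 (a, (c, tt)) (b, (d, tt)) t /\ close_n 2 (proj1_sig (Hdel t)) x t))
    as [[l Hl]|Hno]; [|exfalso; exact (compactness_list 2 _ _ _ Hno)].
  exists (map pt l). intros w Hw.
  destruct (Hl (fst w, (snd w, tt))) as [t [Hin [Hbt Hclose]]]; [apply Hpt, Hw|].
  exists (pt t). split; [apply in_map, Hin|]. apply Hpt in Hbt. split; [exact Hbt|].
  apply (proj2_sig (Hdel t) Hbt w Hw).
  destruct t as [t1 [t2 []]]. destruct Hclose as [H1 [H2 _]].
  eapply Rle_lt_trans; [apply Cmod_le_Rabs_sum|]. simpl.
  change (Rabs (fst w - t1) + Rabs (snd w - t2) < 2 * proj1_sig (Hdel (t1, (t2, tt)))).
  change (Rabs (fst w - t1) < proj1_sig (Hdel (t1, (t2, tt)))) in H1.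
  change (Rabs (snd w - t2) < proj1_sig (Hdel (t1, (t2, tt)))) in H2.
  lra.
Qed.

Lemma box_dominated_by_point (g h : C -> R) : box_locally_dominated g h ->
  exists t0, box t0 /\ forall w, box w -> g w < h t0.
Proof.
  intros Hdom. destruct (box_finite_subcover g h Hdom) as [l Hl].
  assert (Hac : box (a, c)) by (unfold box, in_box; simpl; lra).
  destruct (list_argmax box h l) as [t0 [_ [Ht0 Hmax]]].
  { destruct (Hl _ Hac) as [t [Ht [Hbt _]]]. exists t. auto. }
  exists t0. split; [exact Ht0|]. intros w Hw.
  destruct (Hl w Hw) as [t [Ht [Hbt Hgt]]]. specialize (Hmax t Ht Hbt). lra.
Qed.

Lemma box_continuous_dominated (g h : C -> R) : box_continuous g ->
  (forall t, box t -> g t < h t) -> box_locally_dominated g h.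
Proof.
  intros Hg Hgh t Ht.
  destruct (Hg t Ht (h t - g t)) as [del [Hdel Hw]]; [specialize (Hgh t Ht); lra|].
  exists del. split; [exact Hdel|]. intros w Hw' Hwt.
  specialize (Hw w Hw' Hwt). apply Rabs_def2 in Hw. lra.
Qed.

Lemma box_attains_max (g : C -> R) : box_continuous g ->
  exists w, box w /\ forall w', box w' -> g w' <= g w.
Proof.
  intros Hg.
  set (E := fun x => exists w, box w /\ x = g w).
  destruct (completeness E) as [S [HS_ub HS_lub]].
  { destruct (box_dominated_by_point g (fun t => g t + 1)) as [t0 [_ Ht0]].
    { apply box_continuous_dominated; [exact Hg|]. intros; lra. }
    exists (g t0 + 1). intros x [w [Hw ->]]. apply Rlt_le, Ht0, Hw. }
  { exists (g (a, c)), (a, c). unfold box, in_box; simpl. split; [lra | reflexivity]. }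
  apply NNPP. intro Hno.
  assert (Hlt : forall w, box w -> g w < S).
  { intros w Hw. destruct (Rle_lt_or_eq_dec (g w) S) as [Hl|He]; [|exact Hl|].
    - apply HS_ub. exists w. auto.
    - exfalso. apply Hno. exists w. split; [exact Hw|]. intros w' Hw'.
      rewrite He. apply HS_ub. exists w'. auto. }
  destruct (box_dominated_by_point g (fun t => (g t + S) / 2)) as [t0 [Ht0 Hdom]].
  { apply box_continuous_dominated; [exact Hg|]. intros t Ht. specialize (Hlt t Ht). lra. }
  assert (S <= (g t0 + S) / 2).
  { apply HS_lub. intros x [w [Hw ->]]. apply Rlt_le, Hdom, Hw. }
  specialize (Hlt t0 Ht0). lra.
Qed.

End Box.

(** * The function x^(3/2) along f *)

Definition pow32 (x : R) : R := x * sqrt x.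

Lemma pow32_0 : pow32 0 = 0.
Proof. unfold pow32. ring. Qed.

Lemma pow32_pos (x : R) : 0 < x -> 0 < pow32 x.
Proof. intros Hx. apply Rmult_lt_0_compat; [exact Hx | apply sqrt_lt_R0, Hx]. Qed.

Lemma pow32_sqr (x : R) : 0 <= x -> pow32 x * pow32 x = x ^ 3.
Proof.
  intros Hx. unfold pow32.
  replace (x * sqrt x * (x * sqrt x)) with (x * x * (sqrt x * sqrt x)) by ring.
  rewrite sqrt_sqrt by exact Hx. ring.
Qed.

Lemma pow32_tangent (x y : R) : 0 <= x <= y ->
  pow32 x + 3 / 2 * sqrt x * (y - x) <= pow32 y.
Proof.
  intros [Hx Hxy]. unfold pow32.
  assert (Hp := sqrt_pos x). assert (Hpq : sqrt x <= sqrt y) by (apply sqrt_le_1_alt; lra).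
  assert (Ex := sqrt_sqrt x Hx). assert (Ey := sqrt_sqrt y ltac:(lra)).
  set (p := sqrt x) in *. set (q := sqrt y) in *.
  rewrite <- Ex, <- Ey.
  assert (0 <= (q - p) * (q - p) * (q + p / 2)) by (apply Rmult_le_pos; nra).
  nra.
Qed.

Lemma pow32_lipschitz (x y : R) : 0 <= x <= 1 -> 0 <= y <= 1 ->
  Rabs (pow32 x - pow32 y) <= 2 * Rabs (x - y).
Proof.
  intros Hx Hy. unfold pow32.
  assert (Hp := sqrt_pos x). assert (Hq := sqrt_pos y).
  assert (Hp1 : sqrt x <= 1) by (rewrite <- sqrt_1; apply sqrt_le_1_alt; lra).
  assert (Hq1 : sqrt y <= 1) by (rewrite <- sqrt_1; apply sqrt_le_1_alt; lra).
  assert (Ex := sqrt_sqrt x ltac:(lra)). assert (Ey := sqrt_sqrt y ltac:(lra)).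
  set (p := sqrt x) in *. set (q := sqrt y) in *.
  rewrite <- Ex, <- Ey.
  replace (p * p * p - q * q * q) with ((p - q) * (p * p + p * q + q * q)) by ring.
  replace (p * p - q * q) with ((p - q) * (p + q)) by ring.
  rewrite !Rabs_mult, (Rabs_right (p * p + p * q + q * q)), (Rabs_right (p + q)) by nra.
  assert (Rabs (p - q) * (p * p + p * q + q * q) <= Rabs (p - q) * (2 * (p + q))).
  { apply Rmult_le_compat_l; [apply Rabs_pos | nra]. }
  lra.
Qed.

Lemma Cmod_ascent (f : C -> C) (z d : C) :
  is_derive (K := C_AbsRing) (V := C_NormedModule) f z d -> f z <> 0%C -> d <> 0%C ->
  forall m, 0 < m -> exists w, 0 < Cmod (w - z)%C < m /\
    Cmod (f z) + Cmod (w - z)%C * Cmod d / 2 <= Cmod (f w).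
Proof.
  intros Hd Hfz Hd0 m Hm.
  assert (HF : 0 < Cmod (f z)) by (apply Cmod_gt_0, Hfz).
  assert (HD : 0 < Cmod d) by (apply Cmod_gt_0, Hd0).
  (* Step in the direction u for which d u is a positive multiple of f z. *)
  set (k := Cmod d / Cmod (f z)).
  assert (Hk : 0 < k) by (apply Rdiv_lt_0_compat; assumption).
  set (u := (RtoC k * (f z / d))%C).
  assert (Hu : Cmod u = 1).
  { unfold u. rewrite Cmod_mult, Cmod_R, Cmod_div, Rabs_right by (auto; lra).
    unfold k. field. lra. }
  assert (Hdu : (d * u = RtoC k * f z)%C) by (unfold u; field; exact Hd0).
  destruct (is_derive_C_approx f z d Hd (Cmod d / 2)) as [del [Hdel Happ]]; [lra|].
  set (s := Rmin del m / 2).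
  assert (Hs : 0 < s) by (unfold s; assert (0 < Rmin del m) by (apply Rmin_pos; lra); lra).
  assert (Hsdel : s < del) by (unfold s; assert (Rmin del m <= del) by apply Rmin_l; lra).
  assert (Hsm : s < m) by (unfold s; assert (Rmin del m <= m) by apply Rmin_r; lra).
  exists (z + RtoC s * u)%C.
  replace (z + RtoC s * u - z)%C with (RtoC s * u)%C by ring.
  assert (Hsu : Cmod (RtoC s * u)%C = s) by (rewrite Cmod_mult, Cmod_R, Hu, Rabs_right; lra).
  rewrite Hsu. split; [lra|].
  specialize (Happ (z + RtoC s * u)%C).
  replace (z + RtoC s * u - z)%C with (RtoC s * u)%C in Happ by ring.
  rewrite Hsu in Happ. specialize (Happ Hsdel).
  assert (Hlin : (f z + RtoC s * u * d = f z * RtoC (1 + s * k))%C).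
  { rewrite RtoC_plus, RtoC_mult.
    replace (RtoC s * u * d)%C with (RtoC s * (d * u))%C by ring. rewrite Hdu. ring. }
  assert (Hlin_mod : Cmod (f z * RtoC (1 + s * k))%C = Cmod (f z) + s * Cmod d).
  { rewrite Cmod_mult, Cmod_R, Rabs_right by nra. unfold k. field. lra. }
  assert (T := Rabs_Cmod_sub_le (f z * RtoC (1 + s * k))%C (f (z + RtoC s * u)%C)).
  rewrite Hlin_mod, <- Hlin in T.
  replace (f z + RtoC s * u * d - f (z + RtoC s * u))%C
    with (- (f (z + RtoC s * u) - f z - RtoC s * u * d))%C in T by ring.
  rewrite Cmod_opp in T. apply Rabs_le_between in T. lra.
Qed.

Lemma pow32_Cmod_ascent (f : C -> C) (z d : C) (c : R) : 0 < c ->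
  is_derive (K := C_AbsRing) (V := C_NormedModule) f z d -> f z <> 0%C ->
  c <= Cmod (f z) * (Cmod d * Cmod d) ->
  forall m, 0 < m -> exists w, Cmod (w - z)%C < m /\
    pow32 (Cmod (f z)) + sqrt c / 2 * Cmod (w - z)%C < pow32 (Cmod (f w)).
Proof.
  intros Hc Hd Hfz Hlow m Hm.
  assert (HF : 0 < Cmod (f z)) by (apply Cmod_gt_0, Hfz).
  assert (Hd0 : d <> 0%C).
  { intros ->. rewrite Cmod_0 in Hlow. lra. }
  destruct (Cmod_ascent f z d Hd Hfz Hd0 m Hm) as [w [[Hs Hsm] Hgrow]].
  exists w. split; [exact Hsm|].
  set (F := Cmod (f z)) in *. set (D := Cmod d) in *. set (s := Cmod (w - z)%C) in *.
  assert (HD := Cmod_ge_0 d). fold D in HD.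
  assert (Htan := pow32_tangent F (Cmod (f w)) ltac:(nra)).
  assert (Hsc : sqrt c <= sqrt F * D).
  { rewrite <- (sqrt_Rsqr D HD), <- sqrt_mult by (unfold Rsqr; nra).
    apply sqrt_le_1_alt. unfold Rsqr. lra. }
  assert (Hsqc : 0 < sqrt c) by (apply sqrt_lt_R0, Hc).
  assert (HsF := sqrt_pos F).
  assert (3 / 2 * sqrt F * (s * D / 2) <= 3 / 2 * sqrt F * (Cmod (f w) - F)).
  { apply Rmult_le_compat_l; lra. }
  nra.
Qed.

(** * Functions vanishing near a zero *)

Section LocalVanishing.

Variables (f : C -> C) (z0 : C) (c r0 C0 : R).
Hypotheses (Hc : 0 < c) (Hr0 : 0 < r0) (HC0 : 0 < C0).
Hypothesis Hderive : forall w, Cmod (w - z0)%C < r0 -> exists d,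
  is_derive (K := C_AbsRing) (V := C_NormedModule) f w d /\
  (f w <> 0%C -> c <= Cmod (f w) * (Cmod d * Cmod d)).
Hypothesis Hlinear : forall w, Cmod (w - z0)%C < r0 -> Cmod (f w) <= C0 * Cmod (w - z0)%C.
Hypothesis Hle1 : forall w, Cmod (w - z0)%C < r0 -> Cmod (f w) <= 1.

(* Small enough for the bounds c rho^2 / 16 < |f|^3 <= (2 C0 rho)^3 at a boundary maximum of
   psi to clash. *)
Let rho := Rmin (r0 / 4) (c / (128 * C0 ^ 3)).
Let box := in_box (fst z0 - rho) (fst z0 + rho) (snd z0 - rho) (snd z0 + rho).

Lemma rho_pos : 0 < rho.
Proof.
  apply Rmin_pos; [lra|]. apply Rdiv_lt_0_compat; [exact Hc|].
  assert (0 < C0 ^ 3) by (apply pow_lt, HC0). lra.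
Qed.

Lemma box_Cmod_le (w : C) : box w -> Cmod (w - z0)%C <= 2 * rho.
Proof.
  intros [Hx Hy]. eapply Rle_trans; [apply Cmod_le_Rabs_sum|].
  assert (Rabs (fst (w - z0)%C) <= rho) by (simpl; apply Rabs_le; lra).
  assert (Rabs (snd (w - z0)%C) <= rho) by (simpl; apply Rabs_le; lra).
  lra.
Qed.

Lemma box_in_ball (w : C) : box w -> Cmod (w - z0)%C < r0.
Proof.
  intros Hw. assert (Hrho : rho <= r0 / 4) by apply Rmin_l.
  assert (Hpos := rho_pos). assert (Hle := box_Cmod_le w Hw). lra.
Qed.

Section Maximum.

Variable w1 : C.
Hypotheses (Hw1 : Cmod (w1 - z0)%C < rho / 2) (Hfw1 : f w1 <> 0%C).

Let psi (w : C) : R := pow32 (Cmod (f w)) - sqrt c / 2 * Cmod (w - w1)%C.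

Lemma psi_box_continuous :
  box_continuous (fst z0 - rho) (fst z0 + rho) (snd z0 - rho) (snd z0 + rho) psi.
Proof.
  intros w Hw eps Heps.
  destruct (Hderive w (box_in_ball w Hw)) as [d [Hd _]].
  destruct (is_derive_C_lipschitz f w d Hd) as [del [Hdel Hlip]].
  set (L := 2 * (Cmod d + 1) + sqrt c / 2).
  assert (HL : 0 < L) by (assert (Hd0 := Cmod_ge_0 d); assert (Hs := sqrt_pos c); unfold L; lra).
  exists (Rmin del (eps / L)). split; [apply Rmin_pos; [lra | apply Rdiv_lt_0_compat; lra]|].
  intros w' Hw' Hww.
  assert (Hww1 : Cmod (w' - w)%C < del) by (eapply Rlt_le_trans; [exact Hww | apply Rmin_l]).
  assert (Hww2 : L * Cmod (w' - w)%C < eps).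
  { assert (Cmod (w' - w)%C < eps / L) by (eapply Rlt_le_trans; [exact Hww | apply Rmin_r]).
    apply (Rmult_lt_compat_l L) in H; [|exact HL].
    replace (L * (eps / L)) with eps in H by (field; lra). exact H. }
  assert (Hpow := pow32_lipschitz (Cmod (f w')) (Cmod (f w))
    (conj (Cmod_ge_0 _) (Hle1 w' (box_in_ball w' Hw'))) (conj (Cmod_ge_0 _) (Hle1 w (box_in_ball w Hw)))).
  assert (Hmod := Rabs_Cmod_sub_le (f w') (f w)).
  assert (Hdist := Rabs_Cmod_sub_le (w' - w1)%C (w - w1)%C).
  replace (w' - w1 - (w - w1))%C with (w' - w)%C in Hdist by ring.
  specialize (Hlip w' Hww1).
  unfold psi.
  replace (pow32 (Cmod (f w')) - sqrt c / 2 * Cmod (w' - w1)%C -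
           (pow32 (Cmod (f w)) - sqrt c / 2 * Cmod (w - w1)%C))
    with ((pow32 (Cmod (f w')) - pow32 (Cmod (f w))) +
          - (sqrt c / 2) * (Cmod (w' - w1)%C - Cmod (w - w1)%C)) by ring.
  eapply Rle_lt_trans; [apply Rabs_triang|].
  assert (Hs := sqrt_pos c).
  rewrite Rabs_mult, Rabs_Ropp, (Rabs_right (sqrt c / 2)) by lra.
  assert (sqrt c / 2 * Rabs (Cmod (w' - w1)%C - Cmod (w - w1)%C) <= sqrt c / 2 * Cmod (w' - w)%C).
  { apply Rmult_le_compat_l; lra. }
  unfold L in Hww2. lra.
Qed.

Lemma w1_in_box : box w1.
Proof.
  assert (Hx := re_le_Cmod (w1 - z0)%C). assert (Hy := Rabs_snd_le_Cmod (w1 - z0)%C).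
  unfold Re in Hx. simpl in Hx, Hy.
  apply Rabs_le_between in Hx. apply Rabs_le_between in Hy.
  assert (Hpos := rho_pos). split; lra.
Qed.

Lemma psi_max_pos (ws : C) : (forall w, box w -> psi w <= psi ws) -> 0 < psi ws.
Proof.
  intros Hmax. eapply Rlt_le_trans; [|apply Hmax, w1_in_box].
  unfold psi. rewrite Cmod_sub_diag, Rmult_0_r, Rminus_0_r.
  apply pow32_pos, Cmod_gt_0, Hfw1.
Qed.

Lemma psi_max_not_interior (ws : C) : box ws -> (forall w, box w -> psi w <= psi ws) ->
  ~ (fst z0 - rho < fst ws < fst z0 + rho /\ snd z0 - rho < snd ws < snd z0 + rho).
Proof.
  intros Hws Hmax [Hx Hy].
  assert (Hs := sqrt_pos c).
  assert (Hfws : f ws <> 0%C).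
  { intro E. assert (Hpos := psi_max_pos ws Hmax). unfold psi in Hpos.
    rewrite E, Cmod_0, pow32_0 in Hpos.
    assert (0 <= sqrt c / 2 * Cmod (ws - w1)%C) by (apply Rmult_le_pos; [lra | apply Cmod_ge_0]).
    lra. }
  destruct (Hderive ws (box_in_ball ws Hws)) as [d [Hd Hlow]].
  set (m := Rmin (Rmin (fst z0 + rho - fst ws) (fst ws - (fst z0 - rho)))
                 (Rmin (snd z0 + rho - snd ws) (snd ws - (snd z0 - rho)))).
  assert (Hm : 0 < m) by (unfold m; repeat apply Rmin_pos; lra).
  destruct (pow32_Cmod_ascent f ws d c Hc Hd Hfws (Hlow Hfws) m Hm) as [w [Hwm Hgain]].
  assert (Hw : box w).
  { assert (Hx' := re_le_Cmod (w - ws)%C). assert (Hy' := Rabs_snd_le_Cmod (w - ws)%C).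
    unfold Re in Hx'. simpl in Hx', Hy'.
    apply Rabs_le_between in Hx'. apply Rabs_le_between in Hy'.
    assert (m <= fst z0 + rho - fst ws) by (eapply Rle_trans; [apply Rmin_l | apply Rmin_l]).
    assert (m <= fst ws - (fst z0 - rho)) by (eapply Rle_trans; [apply Rmin_l | apply Rmin_r]).
    assert (m <= snd z0 + rho - snd ws) by (eapply Rle_trans; [apply Rmin_r | apply Rmin_l]).
    assert (m <= snd ws - (snd z0 - rho)) by (eapply Rle_trans; [apply Rmin_r | apply Rmin_r]).
    split; lra. }
  specialize (Hmax w Hw). unfold psi in Hmax.
  assert (Htri := Cmod_sub_triangle w ws w1).
  assert (sqrt c / 2 * Cmod (w - w1)%C <= sqrt c / 2 * (Cmod (w - ws)%C + Cmod (ws - w1)%C))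
    by (apply Rmult_le_compat_l; lra).
  lra.
Qed.

Lemma psi_pos_interior (ws : C) : box ws -> 0 < psi ws ->
  fst z0 - rho < fst ws < fst z0 + rho /\ snd z0 - rho < snd ws < snd z0 + rho.
Proof.
  intros Hws Hpos. apply NNPP. intro Hbd.
  assert (Hfar : rho / 2 < Cmod (ws - w1)%C).
  { apply Rnot_le_lt. intro Hnear. apply Hbd.
    assert (Hx := re_le_Cmod (ws - w1)%C). assert (Hy := Rabs_snd_le_Cmod (ws - w1)%C).
    assert (Hx1 := re_le_Cmod (w1 - z0)%C). assert (Hy1 := Rabs_snd_le_Cmod (w1 - z0)%C).
    unfold Re in Hx, Hx1. simpl in Hx, Hy, Hx1, Hy1.
    apply Rabs_le_between in Hx. apply Rabs_le_between in Hy.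
    apply Rabs_le_between in Hx1. apply Rabs_le_between in Hy1.
    lra. }
  set (F := Cmod (f ws)).
  assert (HF : 0 <= F) by apply Cmod_ge_0.
  assert (Hc2 : 0 < sqrt c / 2) by (assert (Hs := sqrt_lt_R0 c Hc); lra).
  assert (Hrho := rho_pos).
  assert (Hpow : sqrt c / 2 * (rho / 2) < pow32 F).
  { unfold psi in Hpos. fold F in Hpos.
    assert (sqrt c / 2 * (rho / 2) < sqrt c / 2 * Cmod (ws - w1)%C)
      by (apply Rmult_lt_compat_l; lra).
    lra. }
  assert (Hcube : c * (rho * rho) / 16 < F ^ 3).
  { rewrite <- pow32_sqr by exact HF.
    replace (c * (rho * rho) / 16) with (sqrt c / 2 * (rho / 2) * (sqrt c / 2 * (rho / 2))).
    2:{ rewrite <- (sqrt_sqrt c) at 3 by lra. field. }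
    apply Rmult_le_0_lt_compat; nra. }
  assert (HFle : F <= 2 * C0 * rho).
  { assert (Hlin := Hlinear ws (box_in_ball ws Hws)). assert (Hb := box_Cmod_le ws Hws).
    unfold F. nra. }
  assert (HF3 : F ^ 3 <= (2 * C0 * rho) ^ 3) by (apply pow_incr; lra).
  assert (Hrho_c : rho * (128 * C0 ^ 3) <= c).
  { assert (HC3 : 0 < 128 * C0 ^ 3) by (assert (0 < C0 ^ 3) by (apply pow_lt, HC0); lra).
    assert (Hr : rho <= c / (128 * C0 ^ 3)) by apply Rmin_r.
    apply (Rmult_le_compat_r (128 * C0 ^ 3)) in Hr; [|lra].
    replace (c / (128 * C0 ^ 3) * (128 * C0 ^ 3)) with c in Hr by (field; lra). exact Hr. }
  assert ((2 * C0 * rho) ^ 3 <= c * (rho * rho) / 16).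
  { replace ((2 * C0 * rho) ^ 3) with (rho * rho / 16 * (rho * (128 * C0 ^ 3))) by field.
    replace (c * (rho * rho) / 16) with (rho * rho / 16 * c) by field.
    apply Rmult_le_compat_l; nra. }
  lra.
Qed.

Lemma no_nonzero_near_center : False.
Proof.
  assert (Hrho := rho_pos).
  destruct (box_attains_max (fst z0 - rho) (fst z0 + rho) (snd z0 - rho) (snd z0 + rho)
              ltac:(lra) ltac:(lra) psi psi_box_continuous) as [ws [Hws Hmax]].
  exact (psi_max_not_interior ws Hws Hmax (psi_pos_interior ws Hws (psi_max_pos ws Hmax))).
Qed.

End Maximum.

Lemma locally_zero_at_center : exists r, 0 < r /\ forall w, Cmod (w - z0)%C < r -> f w = 0%C.
Proof.
  exists (rho / 2). split; [assert (Hrho := rho_pos); lra|].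
  intros w Hw. apply NNPP. intro Hfw. exact (no_nonzero_near_center w Hw Hfw).
Qed.

End LocalVanishing.

Lemma locally_zero_of_lower_bound (f : C -> C) (z0 : C) (c a r0 : R) :
  0 < c -> 0 < a -> 0 < r0 -> f z0 = 0%C ->
  (forall w, Cmod (w - z0)%C < r0 -> exists d,
     is_derive (K := C_AbsRing) (V := C_NormedModule) f w d /\
     (f w <> 0%C -> Cmod (f w) <= a -> c <= Cmod (f w) * (Cmod d * Cmod d))) ->
  exists r, 0 < r /\ forall w, Cmod (w - z0)%C < r -> f w = 0%C.
Proof.
  intros Hc Ha Hr0 Hf0 Hder.
  destruct (Hder z0) as [d0 [Hd0 _]]; [rewrite Cmod_sub_diag; exact Hr0|].
  destruct (is_derive_C_lipschitz f z0 d0 Hd0) as [del [Hdel Hlip]].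
  set (C0 := Cmod d0 + 1).
  assert (HC0 : 0 < C0) by (assert (Hq := Cmod_ge_0 d0); unfold C0; lra).
  set (b := Rmin a 1).
  assert (Hb : 0 < b) by (apply Rmin_pos; lra).
  set (r1 := Rmin (Rmin r0 del) (b / C0)).
  assert (Hr1 : 0 < r1) by (repeat apply Rmin_pos; try apply Rdiv_lt_0_compat; lra).
  assert (Hr1_r0 : r1 <= r0) by (eapply Rle_trans; [apply Rmin_l | apply Rmin_l]).
  assert (Hlin : forall w, Cmod (w - z0)%C < r1 -> Cmod (f w) <= C0 * Cmod (w - z0)%C).
  { intros w Hw. replace (f w) with (f w - f z0)%C by (rewrite Hf0; ring).
    apply Hlip. eapply Rlt_le_trans; [exact Hw|]. eapply Rle_trans; [apply Rmin_l | apply Rmin_r]. }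
  assert (Hsmall : forall w, Cmod (w - z0)%C < r1 -> Cmod (f w) <= b).
  { intros w Hw. eapply Rle_trans; [apply Hlin, Hw|].
    assert (Hr1b : r1 <= b / C0) by apply Rmin_r.
    apply (Rmult_le_reg_r (/ C0)); [apply Rinv_0_lt_compat, HC0|].
    replace (C0 * Cmod (w - z0)%C * / C0) with (Cmod (w - z0)%C) by (field; lra).
    unfold Rdiv in Hr1b. lra. }
  apply (locally_zero_at_center f z0 c r1 C0 Hc Hr1 HC0).
  - intros w Hw. destruct (Hder w ltac:(lra)) as [d [Hd Hlow]].
    exists d. split; [exact Hd|]. intros Hfw. apply Hlow; [exact Hfw|].
    eapply Rle_trans; [apply Hsmall, Hw | apply Rmin_l].
  - exact Hlin.
  - intros w Hw. eapply Rle_trans; [apply Hsmall, Hw | apply Rmin_r].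
Qed.

(** * Zeros of meromorphic functions on a domain *)

Section Meromorphic.

Variables (U P : C -> Prop) (f : C -> C).
Hypotheses (HU : is_domain U) (Hf : meromorphic_on U P f).

Lemma nonpole_ball (z : C) : U z -> ~ P z ->
  exists e, 0 < e /\ forall w, Cmod (w - z)%C < e -> U w /\ ~ P w.
Proof.
  intros Hz Hnp. destruct HU as [HUo _]. destruct Hf as [_ [Hisol _]].
  destruct (open_Cmod_ball U z HUo Hz) as [e1 [He1 HU1]].
  destruct (Hisol z Hz) as [e2 [He2 Hpole]].
  exists (Rmin e1 e2). split; [apply Rmin_pos; assumption|].
  intros w Hw. split.
  - apply HU1. eapply Rlt_le_trans; [exact Hw | apply Rmin_l].
  - intro Pw. apply Hnp. rewrite <- (Hpole w); [exact Pw | | exact Pw].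
    eapply Rlt_le_trans; [exact Hw | apply Rmin_r].
Qed.

Lemma nonpole_near (z : C) : U z -> forall e, 0 < e ->
  exists w, Cmod (w - z)%C < e /\ U w /\ ~ P w.
Proof.
  intros Hz e He. destruct (classic (P z)) as [Pz|Pz].
  - destruct HU as [HUo _]. destruct Hf as [_ [Hisol _]].
    destruct (open_Cmod_ball U z HUo Hz) as [e1 [He1 HU1]].
    destruct (Hisol z Hz) as [e2 [He2 Hpole]].
    set (t := Rmin e (Rmin e1 e2) / 2).
    assert (Ht : 0 < t) by (unfold t; assert (0 < Rmin e (Rmin e1 e2)) by (repeat apply Rmin_pos; lra); lra).
    assert (Hte : t < e) by (unfold t; assert (Rmin e (Rmin e1 e2) <= e) by apply Rmin_l; lra).
    assert (Hte1 : t < e1).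
    { unfold t. assert (Rmin e (Rmin e1 e2) <= e1) by (eapply Rle_trans; [apply Rmin_r | apply Rmin_l]).
      assert (0 < Rmin e (Rmin e1 e2)) by (repeat apply Rmin_pos; lra). lra. }
    assert (Hte2 : t < e2).
    { unfold t. assert (Rmin e (Rmin e1 e2) <= e2) by (eapply Rle_trans; [apply Rmin_r | apply Rmin_r]).
      assert (0 < Rmin e (Rmin e1 e2)) by (repeat apply Rmin_pos; lra). lra. }
    assert (Hdist : Cmod (z + RtoC t - z)%C = t).
    { replace (z + RtoC t - z)%C with (RtoC t) by ring. rewrite Cmod_R. apply Rabs_right. lra. }
    exists (z + RtoC t)%C. rewrite Hdist. split; [exact Hte|]. split.
    + apply HU1. rewrite Hdist. exact Hte1.
    + intro Pw. assert (E : (z + RtoC t)%C = z) by (apply Hpole; [rewrite Hdist | ]; assumption).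
      rewrite E, Cmod_sub_diag in Hdist. lra.
  - exists z. rewrite Cmod_sub_diag. auto.
Qed.

Lemma pole_nonzero_near (p : C) : P p ->
  exists e, 0 < e /\ forall w, Cmod (w - p)%C < e -> w <> p -> f w <> 0%C.
Proof.
  intros Pp. destruct Hf as [_ [_ [_ Hlim]]].
  destruct (Hlim p Pp (fun y => 0 < y) (ex_intro _ 0 (fun x Hx => Hx))) as [eps Heps].
  exists eps. split; [apply cond_pos|]. intros w Hw Hwp Hfw.
  specialize (Heps w (C_NormedModule_mixin_compat1 p w eps Hw) Hwp).
  simpl in Heps. rewrite Hfw, Cmod_0 in Heps. lra.
Qed.

Lemma zeros_dichotomy :
  (forall z, U z -> ~ P z -> f z = 0%C ->
     exists r, 0 < r /\ forall w, Cmod (w - z)%C < r -> f w = 0%C) ->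
  (forall z, U z -> ~ P z -> f z = 0%C) \/ (forall z, U z -> ~ P z -> f z <> 0%C).
Proof.
  intros Hzeros.
  set (A := fun z => exists e, 0 < e /\ forall w, Cmod (w - z)%C < e -> f w = 0%C).
  set (B := fun z => exists e, 0 < e /\
              forall w, Cmod (w - z)%C < e -> U w -> ~ P w -> f w <> 0%C).
  assert (Hcover : forall z, U z -> A z \/ B z).
  { intros z Hz. destruct (classic (P z)) as [Pz|Pz].
    - right. destruct (pole_nonzero_near z Pz) as [e [He Hne]].
      exists e. split; [exact He|]. intros w Hw _ Pw. apply Hne; [exact Hw|].
      intros ->. exact (Pw Pz).
    - destruct (classic (f z = 0%C)) as [Hfz|Hfz]; [left; exact (Hzeros z Hz Pz Hfz)|].
      right. destruct Hf as [_ [_ [Hder _]]]. destruct (Hder z Hz Pz) as [d Hd].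
      destruct (is_derive_C_nonzero_near f z d Hd Hfz) as [e [He Hne]].
      exists e. split; [exact He|]. intros w Hw _ _. exact (Hne w Hw). }
  assert (Hdisj : forall z, U z -> A z -> B z -> False).
  { intros z Hz [eA [HeA HA]] [eB [HeB HB]].
    destruct (nonpole_near z Hz (Rmin eA eB) (Rmin_pos _ _ HeA HeB)) as [w [Hw [Uw Pw]]].
    apply (HB w); [eapply Rlt_le_trans; [exact Hw | apply Rmin_r] | exact Uw | exact Pw |].
    apply HA. eapply Rlt_le_trans; [exact Hw | apply Rmin_l]. }
  destruct HU as [_ [Hconn _]].
  destruct (Hconn A B (open_Cmod_interior _) (open_Cmod_interior _) Hcover Hdisj) as [HA|HB].
  - left. intros z Hz _. destruct (HA z Hz) as [e [He Hzero]].
    apply Hzero. rewrite Cmod_sub_diag. exact He.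
  - right. intros z Hz Pz. destruct (HB z Hz) as [e [He Hne]].
    apply Hne; [rewrite Cmod_sub_diag; exact He | exact Hz | exact Pz].
Qed.

End Meromorphic.

Definition ode_eq (k : R) (F d : C) : Prop :=
  Cmult (RtoC 9) (Cmult (Cmult F F) (Cmult d d)) =
  Cmult (RtoC 2)
    (Cmult (Cminus (RtoC 1) (Cmult F F))
       (Cplus (Cminus (Cmult (RtoC 4) (Cmult F (Cmult F F))) (Cmult (RtoC 3) F)) (RtoC k))).

Lemma ode_eq_at_zero (k : R) (d : C) : ode_eq k 0%C d -> k = 0.
Proof.
  unfold ode_eq. intros Heq.
  assert (E : (RtoC 2 * RtoC k)%C = RtoC 0).
  { transitivity (RtoC 9 * (0 * 0 * (d * d)))%C; [rewrite Heq | ]; ring. }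
  apply (f_equal fst) in E. simpl in E. lra.
Qed.

Lemma ode_eq_lower_bound (F d : C) : ode_eq 0 F d -> F <> 0%C -> Cmod F <= 1 / 2 ->
  1 / 3 <= Cmod F * (Cmod d * Cmod d).
Proof.
  unfold ode_eq. intros Heq HF HF2.
  assert (E : (RtoC 9 * (F * (d * d)) = RtoC 2 * ((1 - F * F) * (RtoC 4 * (F * F) - RtoC 3)))%C).
  { transitivity (/ F * (RtoC 9 * (F * F * (d * d))))%C; [field; exact HF|].
    rewrite Heq. field. exact HF. }
  apply (f_equal Cmod) in E.
  rewrite !Cmod_mult, !Cmod_R, (Rabs_right 9), (Rabs_right 2) in E by lra.
  assert (T1 := Rabs_Cmod_sub_le 1 (F * F)%C).
  assert (T2 := Rabs_Cmod_sub_le (RtoC 3) (RtoC 4 * (F * F))%C).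
  rewrite Cmod_1, Cmod_mult in T1. rewrite Cmod_sub_sym, !Cmod_mult, !Cmod_R in T2.
  rewrite (Rabs_right 3), (Rabs_right 4) in T2 by lra.
  apply Rabs_le_between in T1. apply Rabs_le_between in T2.
  assert (H0 := Cmod_ge_0 F). assert (H1 := Cmod_ge_0 d).
  set (x := Cmod F) in *. set (y := Cmod d) in *.
  set (p := Cmod (1 - F * F)%C) in *. set (q := Cmod (RtoC 4 * (F * F) - RtoC 3)%C) in *.
  assert (Hp : 3 / 4 <= p) by nra.
  assert (Hq : 2 <= q) by nra.
  nra.
Qed.

Theorem theorem7 (lam : R) (U P : C -> Prop) (f : C -> C) :
  0 < lam < 1 ->
  is_domain U ->
  meromorphic_on U P f ->
  (* f is nonconstant on its domain of holomorphy *)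
  (exists z1 z2, U z1 /\ ~ P z1 /\ U z2 /\ ~ P z2 /\ f z1 <> f z2) ->
  (* the differential equation 9 f^2 (f')^2 = 2 (1 - f^2)(4 f^3 - 3 f + 1 - 2 lam^2) *)
  (forall z d, U z -> ~ P z ->
     is_derive (K := C_AbsRing) (V := C_NormedModule) f z d ->
     Cmult (RtoC 9) (Cmult (Cmult (f z) (f z)) (Cmult d d)) =
     Cmult (RtoC 2)
       (Cmult (Cminus (RtoC 1) (Cmult (f z) (f z)))
          (Cplus (Cminus (Cmult (RtoC 4) (Cmult (f z) (Cmult (f z) (f z))))
                         (Cmult (RtoC 3) (f z)))
                 (RtoC (1 - 2 * lam ^ 2))))) ->
  forall z, U z -> ~ P z -> f z <> RtoC 0.
Proof.
  intros _ HU Hf [z1 [z2 [Hz1 [Hr1 [Hz2 [Hr2 Hneq]]]]]] Hode z Hz Hrz Hfz.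
  pose proof Hf as (_ & _ & Hder & _).
  assert (Hk : 1 - 2 * lam ^ 2 = 0).
  { destruct (Hder z Hz Hrz) as [d Hd]. apply (ode_eq_at_zero _ d).
    rewrite <- Hfz. exact (Hode z d Hz Hrz Hd). }
  rewrite Hk in Hode.
  destruct (zeros_dichotomy U P f HU Hf) as [Hall|Hnone].
  - intros z0 Hz0 Hr0 Hf0.
    destruct (nonpole_ball U P f HU Hf z0 Hz0 Hr0) as [e [He Hball]].
    apply (locally_zero_of_lower_bound f z0 (1 / 3) (1 / 2) e); [lra | lra | exact He | exact Hf0 |].
    intros w Hw. destruct (Hball w Hw) as [Uw Rw]. destruct (Hder w Uw Rw) as [d Hd].
    exists d. split; [exact Hd|]. apply ode_eq_lower_bound, (Hode w d Uw Rw Hd).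
  - apply Hneq. rewrite (Hall z1 Hz1 Hr1), (Hall z2 Hz2 Hr2). reflexivity.
  - exact (Hnone z Hz Hrz Hfz).
Qed.
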